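(* Let $\mathbf{x_0}=(x_1,\dots,x_m)\in \mathbb{R}^m$ and let $m_1,\dots,m_n\in\mathbb{N}$ with $m=\sum_{i=1}^n m_i$. Set $s_0=0$ and $s_k=\sum_{i=1}^k m_i$ for $1\le k\le n$. Let $p,p_1,\dots,p_n\in(1,\infty)$ with conjugate exponents $q,q_1,\dots,q_n$ (i.e. $1/p+1/q=1$, $1/p_k+1/q_k=1$). Let $\mathbf{a}=(a_1,\dots,a_m)\in \mathbb{R}^m\setminus \{\theta\}$ and $W=\{(z_1,\dots,z_m)\in \mathbb{R}^m: \sum_{i=1}^m a_iz_i=0\}$. Then for all $(b_1,\dots,b_m)\in W\setminus \{\theta\}$ and all $\lambda \in \mathbb{R}$, $$\Bigg(\sum_{k=1}^n\Big(\sum_{j=s_{k-1}+1}^{s_k}|x_j-\lambda a_j|^{p_k}\Big)^{p/p_k}\Bigg)^{1/p}\Bigg(\sum_{k=1}^n\Big(\sum_{j=s_{k-1}+1}^{s_k}|b_j|^{q_k}\Big)^{q/q_k}\Bigg)^{1/q}\ge \Big| \sum_{j=1}^m x_jb_j\Big|.$$ Moreover, the inequality is optimal: if $W\neq\{\theta\}$, then the minimum over $\lambda\in\mathbb{R}$ of the first factor equals the maximum over $(b_1,\dots,b_m)\in W\setminus\{\theta\}$ of $\big|\sum_j x_jb_j\big|$ divided by the second factor.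
   Context: $\theta$ denotes the zero vector of $\mathbb{R}^m$. *)

From HB Require Import structures.
From mathcomp Require Import all_boot all_order all_algebra.
From mathcomp Require Import all_classical all_reals all_analysis.
Set Implicit Arguments. Unset Strict Implicit. Unset Printing Implicit Defensive.
Import Order.TTheory GRing.Theory Num.Theory.
Local Open Scope ring_scope.

(* s_k = m_1 + ... + m_k  (blocks indexed 0..n-1, so block k consists of the
   0-based indices j with s_k <= j < s_{k+1}) *)
Definition sidx (n : nat) (ms : 'I_n -> nat) (k : nat) : nat :=
  (\sum_(i < n | (i < k)%N) ms i)%N.

Definition mixnorm (R : realType) (n m : nat) (ms : 'I_n -> nat)
  (p : R) (ps : 'I_n -> R) (v : 'rV[R]_m) : R :=
  (\sum_(k < n)
     (\sum_(j < m | (sidx ms k <= j < sidx ms k.+1)%N) `|v ord0 j| `^ ps k)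
       `^ (p / ps k)) `^ p^-1.

Definition dotv (R : realType) (m : nat) (u v : 'rV[R]_m) : R :=
  \sum_(j < m) u ord0 j * v ord0 j.

(* Hoelder's inequality applied inside each block, and then to the vector of
   block norms, gives |<u, b>| <= N_p(u) N_q(b); for b in W we have
   <x, b> = <x - lam a, b>, whence the inequality.
   For optimality, every v has a dual vector beta(v), with
   beta(v)_j = sgn(v_j) |v_j|^(p_k - 1) S_k^(p/p_k - 1) for j in block k, where
   S_k = sum_{j in block k} |v_j|^(p_k); it realises the equality case of both
   Hoelder steps: <v, beta(v)> = N_p(v) N_q(beta(v)).  The continuous function
   lam |-> <a, beta(x - lam a)> has the sign of -lam as soon as
   N_p(x - lam a) > N_p(x), which holds for |lam| large, so it vanishes at some
   lam0.  Then beta(x - lam0 a) lies in W, and the equality case makes lam0 a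
   minimiser of the first factor and beta(x - lam0 a) a maximiser of the ratio. *)

From HB Require Import structures.
From mathcomp Require Import all_boot all_order all_algebra.
From mathcomp Require Import all_classical all_reals all_analysis.
From mathcomp Require Import ring.
Import Order.TTheory GRing.Theory Num.Theory.
Import numFieldNormedType.Exports.
Local Open Scope classical_set_scope.
Local Open Scope ring_scope.
Set Implicit Arguments. Unset Strict Implicit. Unset Printing Implicit Defensive.

Section Blocks.
Variables (n m : nat) (ms : 'I_n -> nat).
Hypothesis hm : m = (\sum_(i < n) ms i)%N.

Definition in_block (k : 'I_n) (j : 'I_m) : bool := (sidx ms k <= j < sidx ms k.+1)%N.

Lemma sidx_homo : {homo sidx ms : k k' / (k <= k')%N}.
Proof.
move=> k k' kk'; rewrite /sidx [leqRHS]big_mkcond [leqLHS]big_mkcond /=.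
by apply: leq_sum => i _; case: ifP => // ik; rewrite (leq_trans ik kk').
Qed.

Lemma sidx_n : sidx ms n = m.
Proof. by rewrite /sidx hm; apply: eq_bigl => i; rewrite ltn_ord. Qed.

Lemma in_block_exists (j : 'I_m) : exists k, in_block k j.
Proof.
suff : forall N, (N <= n)%N -> (j < sidx ms N)%N -> exists k : 'I_n, in_block k j.
  by move/(_ n (leqnn n)); apply; rewrite sidx_n.
elim=> [|N IH] Nn; first by rewrite /sidx big_pred0.
case: (ltnP j (sidx ms N)) => jN jN1; first exact: IH (ltnW Nn) jN.
by exists (Ordinal Nn); rewrite /in_block /= jN jN1.
Qed.

Lemma in_block_uniq k k' j : in_block k j -> in_block k' j -> k = k'.
Proof.
move=> /andP[jk kj] /andP[jk' k'j]; apply: val_inj.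
case: (ltngtP k k') => // [lt_kk'|lt_k'k].
- by have := leq_trans (leq_trans kj (sidx_homo lt_kk')) jk'; rewrite ltnn.
- by have := leq_trans (leq_trans k'j (sidx_homo lt_k'k)) jk; rewrite ltnn.
Qed.

Lemma big_in_block (R : Type) (idx : R) (op : Monoid.com_law idx) j k (F : 'I_n -> R) :
  in_block k j -> \big[op/idx]_(k' | in_block k' j) F k' = F k.
Proof.
move=> kj; rewrite (big_pred1 k) // => k'.
by apply/idP/eqP => [/in_block_uniq/(_ kj)|->].
Qed.

Lemma sum_by_blocks (R : nmodType) (F : 'I_m -> R) :
  \sum_j F j = \sum_k \sum_(j | in_block k j) F j.
Proof.
rewrite (exchange_big_dep xpredT) //=; apply: eq_bigr => j _.
by have [k kj] := in_block_exists j; rewrite (big_in_block _ _ kj).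
Qed.

End Blocks.

Section Conjugate.
Variable R : realType.
Implicit Types p q r s : R.

Lemma conjugate_gt0 p q : 1 < p -> p^-1 + q^-1 = 1 -> 0 < q.
Proof.
move=> p1 pq; rewrite -invr_gt0 -[q^-1](addKr p^-1) pq addrC subr_gt0.
by rewrite invf_lt1 // (lt_trans ltr01).
Qed.

Lemma conjugateE p q : 1 < p -> p^-1 + q^-1 = 1 -> q = p / (p - 1).
Proof.
move=> p1 pq; have -> : q = (1 - p^-1)^-1 by rewrite -pq addrAC subrr add0r invrK.
by field; rewrite subr_eq0 !gt_eqF // (lt_trans ltr01).
Qed.

Lemma conjugate_subr1_mul p q : 1 < p -> p^-1 + q^-1 = 1 -> (p - 1) * q = p.
Proof.
move=> p1 pq; rewrite (conjugateE p1 pq) mulrC divfK // subr_eq0 gt_eqF //.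
Qed.

Lemma conjugate_block_exponent_gt0 p r s :
  1 < p -> 1 < r -> r^-1 + s^-1 = 1 -> 0 < 1 + (p / r - 1) * s.
Proof.
move=> p1 r1 rs; rewrite (conjugateE r1 rs).
have r0 : 0 < r by apply: lt_trans r1.
have -> : 1 + (p / r - 1) * (r / (r - 1)) = (p - 1) / (r - 1).
  by field; rewrite subr_eq0 !gt_eqF.
by rewrite divr_gt0 // subr_gt0.
Qed.

Lemma conjugate_block_exponentE p q r s :
  1 < p -> p^-1 + q^-1 = 1 -> 1 < r -> r^-1 + s^-1 = 1 ->
  (1 + (p / r - 1) * s) * (q / s) = p / r.
Proof.
move=> p1 pq r1 rs; rewrite (conjugateE p1 pq) (conjugateE r1 rs).
have p0 : 0 < p by apply: lt_trans p1.
have r0 : 0 < r by apply: lt_trans r1.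
by field; rewrite !subr_eq0 !gt_eqF.
Qed.

End Conjugate.

Section Hoelder.
Variable R : realType.

Lemma young_normalized (u v A B p q : R) : 0 <= u -> 0 <= v -> 0 < A -> 0 < B ->
  0 < p -> 0 < q -> p^-1 + q^-1 = 1 ->
  u * v <= A `^ p^-1 * B `^ q^-1 * (u `^ p / A / p + v `^ q / B / q).
Proof.
move=> u0 v0 A0 B0 p0 q0 pq.
have Ap : 0 < A `^ p^-1 by exact: powR_gt0.
have Bq : 0 < B `^ q^-1 by exact: powR_gt0.
have := conjugate_powR (divr_ge0 u0 (ltW Ap)) (divr_ge0 v0 (ltW Bq)) p0 q0 pq.
rewrite !powRM ?invr_ge0 ?(ltW Ap) ?(ltW Bq) // -!powRN -!powRrM.
rewrite !mulNr !mulVf ?gt_eqF // !powRN !powRr1 ?(ltW A0) ?(ltW B0) // => young.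
have -> : u * v = A `^ p^-1 * B `^ q^-1 * (u / A `^ p^-1 * (v / B `^ q^-1)).
  by field; rewrite !gt_eqF.
by rewrite ler_pM2l ?mulr_gt0.
Qed.

Lemma hoelder_sum (I : finType) (P : pred I) (f g : I -> R) (p q : R) :
  1 < p -> p^-1 + q^-1 = 1 -> (forall i, 0 <= f i) -> (forall i, 0 <= g i) ->
  \sum_(i | P i) f i * g i <=
  (\sum_(i | P i) f i `^ p) `^ p^-1 * (\sum_(i | P i) g i `^ q) `^ q^-1.
Proof.
move=> p1 pq f0 g0.
have p0 : 0 < p by apply: lt_trans p1.
have q0 : 0 < q := conjugate_gt0 p1 pq.
set A := \sum_(i | P i) f i `^ p; set B := \sum_(i | P i) g i `^ q.
have A0 : 0 <= A by apply: sumr_ge0 => i _; exact: powR_ge0.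
have B0 : 0 <= B by apply: sumr_ge0 => i _; exact: powR_ge0.
have zero_sum (h : I -> R) r : (forall i, 0 <= h i) -> \sum_(i | P i) h i `^ r = 0 ->
    forall i, P i -> h i = 0.
  move=> h0 hr0 i Pi; apply: (@powR_eq0_eq0 _ _ r).
  by apply: (psumr_eq0P _ hr0) => // j _; exact: powR_ge0.
have [A_eq0|A_neq0] := eqVneq A 0.
  rewrite big1 ?mulr_ge0 ?powR_ge0 // => i Pi.
  by rewrite (zero_sum _ _ f0 A_eq0) ?mul0r.
have [B_eq0|B_neq0] := eqVneq B 0.
  rewrite big1 ?mulr_ge0 ?powR_ge0 // => i Pi.
  by rewrite (zero_sum _ _ g0 B_eq0) ?mulr0.
have Agt0 : 0 < A by rewrite lt_def A_neq0.
have Bgt0 : 0 < B by rewrite lt_def B_neq0.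
apply: le_trans (ler_sum _ (fun i _ => young_normalized (f0 i) (g0 i) Agt0 Bgt0 p0 q0 pq)) _.
rewrite -mulr_sumr big_split /= -!mulr_suml -/A -/B !mulfV ?gt_eqF //.
by rewrite !mul1r pq mulr1.
Qed.

End Hoelder.

Section Continuity.
Variable R : realType.

Lemma cvg_big_sum (I : Type) (r : seq I) (P : pred I) (F : I -> R -> R) (l0 : R) :
  (forall i, F i l @[l --> l0] --> F i l0) ->
  \sum_(i <- r | P i) F i l @[l --> l0] --> \sum_(i <- r | P i) F i l0.
Proof.
move=> cvgF; elim: r => [|i r IH].
  by under eq_fun do rewrite big_nil; rewrite big_nil; exact: cvg_cst.
under eq_fun do rewrite big_cons; rewrite big_cons.
by case: (P i) => //; exact: cvgD.
Qed.

Lemma cvg_powR_gt0 (r a : R) : 0 < a -> b `^ r @[b --> a] --> a `^ r.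
Proof.
move=> a0; apply: (@differentiable_continuous _ R^o R^o a (fun b : R => b `^ r)).
by apply/derivable1_diffP; apply: derivable_powR; rewrite in_itv /= a0.
Qed.

Lemma continuous_norm_powR (r : R) : 0 < r -> continuous (fun y : R => `|y| `^ r).
Proof.
move=> r0 y0; have [->|y0_neq0] := eqVneq y0 0; last first.
  apply: (@cvg_comp _ _ _ (fun y : R => `|y|) (fun b : R => b `^ r) _ (nbhs `|y0|)).
    exact: cvg_norm.
  by apply: cvg_powR_gt0; rewrite normr_gt0.
apply/cvgrPdist_lt => e e0; rewrite /= normr0 powR0 ?gt_eqF //.
near=> y; rewrite sub0r normrN ger0_norm ?powR_ge0 //.
have -> : e = (e `^ r^-1) `^ r by rewrite -powRrM mulVf ?gt_eqF // powRr1 // ltW.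
apply: gt0_ltr_powR; rewrite ?nnegrE ?powR_ge0 //.
near: y; exists (e `^ r^-1); first by rewrite /= powR_gt0.
by move=> y; rewrite /ball_ /= sub0r normrN.
Unshelve. all: end_near.
Qed.

Lemma cvg_norm_le0 (f g : R -> R) (l0 : R) : (forall l, `|f l| <= g l) ->
  g l @[l --> l0] --> 0 -> f l @[l --> l0] --> 0.
Proof.
move=> fg g0; apply/norm_cvg0P.
apply: (@squeeze_cvgr _ _ _ _ (fun=> 0) g) => //; last exact: cvg_cst.
by near=> l; rewrite normr_ge0 fg.
Unshelve. all: end_near.
Qed.

Definition spowR (r u : R) := Num.sg u * `|u| `^ r.

Lemma norm_spowR (r u : R) : r != 0 -> `|spowR r u| = `|u| `^ r.
Proof.
move=> r0; rewrite /spowR normrM normr_sg ger0_norm ?powR_ge0 //.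
by have [->|] := eqVneq u 0; rewrite ?normr0 ?powR0 ?mulr0 ?mul1r.
Qed.

Lemma mul_spowR (r u : R) : 0 < r -> u * spowR (r - 1) u = `|u| `^ r.
Proof. by move=> r0; rewrite /spowR mulrA [u * _]mulrC -normrEsg mulr_powRB1. Qed.

Lemma continuous_spowR (r : R) : 0 < r -> continuous (spowR r).
Proof.
move=> r0 u0; have [->|u0_neq0] := eqVneq u0 0.
  rewrite /continuous_at [spowR r 0]/spowR sgr0 mul0r.
  apply: (@cvg_norm_le0 _ (fun u => `|u| `^ r)).
    by move=> u; rewrite norm_spowR ?gt_eqF.
  by have := continuous_norm_powR r0 (x := 0); rewrite /continuous_at normr0 powR0 ?gt_eqF.
apply: cvgM; last exact: continuous_norm_powR.
suff sg_near : {near u0, (fun=> Num.sg u0) =1 Num.sg}.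
  by apply: cvg_trans (near_eq_cvg sg_near) _; exact: cvg_cst.
case: (ltgtP u0 0) => [u0_lt0|u0_gt0|]; last by move/eqP: u0_neq0.
- by near=> u; rewrite !ltr0_sg //; near: u; exact: lt_nbhsl.
- by near=> u; rewrite !gtr0_sg //; near: u; exact: lt_nbhsr.
Unshelve. all: end_near.
Qed.

Lemma norm_spowR_mul_le (y S p r : R) : 1 < p -> 1 < r ->
  `|y| `^ r <= S -> `|spowR (r - 1) y * S `^ (p / r - 1)| <= S `^ ((p - 1) / r).
Proof.
move=> p1 r1 yS; have r0 : 0 < r by apply: lt_trans r1.
have r1_neq0 : r - 1 != 0 by rewrite subr_eq0 gt_eqF.
rewrite normrM norm_spowR // ger0_norm ?powR_ge0 //.
have [->|y_neq0] := eqVneq y 0; first by rewrite normr0 powR0 // mul0r powR_ge0.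
have S0 : 0 < S by apply: lt_le_trans yS; rewrite powR_gt0 ?normr_gt0.
have yS' : `|y| <= S `^ r^-1.
  rewrite -[leLHS](powRr1 (normr_ge0 y)) -(mulfV (lt0r_neq0 r0)) powRrM.
  by apply: ge0_ler_powR yS; rewrite ?invr_ge0 ?nnegrE ?powR_ge0 ?(ltW r0) ?(ltW S0).
have yS'' : `|y| `^ (r - 1) <= S `^ (r^-1 * (r - 1)).
  rewrite powRrM; apply: ge0_ler_powR yS'; rewrite ?nnegrE ?powR_ge0 //.
  by rewrite subr_ge0 ltW.
apply: le_trans (ler_wpM2r (powR_ge0 _ _) yS'') _.
have -> : (p - 1) / r = r^-1 * (r - 1) + (p / r - 1) by field; rewrite gt_eqF.
by rewrite [leRHS]powRD // (gt_eqF S0) implybT.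
Qed.

End Continuity.

Lemma ler_sum_term (R : numDomainType) (I : finType) (P : pred I) (F : I -> R) i :
  (forall j, P j -> 0 <= F j) -> P i -> F i <= \sum_(j | P j) F j.
Proof. by move=> F0 Pi; rewrite (bigD1 i) //= lerDl sumr_ge0 // => j /andP[/F0]. Qed.

Lemma dotvBZ (R : realType) (m : nat) (u v b : 'rV[R]_m) (l : R) :
  dotv (u - l *: v) b = dotv u b - l * dotv v b.
Proof.
by rewrite /dotv mulr_sumr -sumrB; apply: eq_bigr => j _; rewrite !mxE mulrBl mulrA.
Qed.

Section MixedNorm.
Variables (R : realType) (n m : nat) (ms : 'I_n -> nat).
Hypothesis hm : m = (\sum_(i < n) ms i)%N.
Implicit Types (p : R) (r : 'I_n -> R) (v : 'rV[R]_m).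

Definition block_sum r v k := \sum_(j | in_block ms k j) `|v ord0 j| `^ r k.

Definition mixsum p r v := \sum_k block_sum r v k `^ (p / r k).

Lemma mixnormE p r v : mixnorm ms p r v = mixsum p r v `^ p^-1.
Proof. by []. Qed.

Lemma block_sum_ge0 r v k : 0 <= block_sum r v k.
Proof. by apply: sumr_ge0 => j _; exact: powR_ge0. Qed.

Lemma mixsum_ge0 p r v : 0 <= mixsum p r v.
Proof. by apply: sumr_ge0 => k _; exact: powR_ge0. Qed.

Lemma mixnorm_ge0 p r v : 0 <= mixnorm ms p r v.
Proof. exact: powR_ge0. Qed.

Lemma norm_powR_le_block_sum r v k j :
  in_block ms k j -> `|v ord0 j| `^ r k <= block_sum r v k.
Proof. by apply: ler_sum_term => i _; exact: powR_ge0. Qed.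

Lemma mixnorm_gt0 p r v : v != 0 -> 0 < mixnorm ms p r v.
Proof.
move=> v_neq0; have [j vj_neq0] : exists j, v ord0 j != 0.
  apply/existsP; apply: contra_neqT v_neq0 => /existsPn v_eq0.
  by apply/rowP => j; rewrite !mxE; apply/eqP/negPn/v_eq0.
have [k kj] := in_block_exists hm j.
have block_gt0 : 0 < block_sum r v k.
  apply: lt_le_trans (norm_powR_le_block_sum r v kj).
  by rewrite powR_gt0 ?normr_gt0.
rewrite mixnormE powR_gt0 //; apply: lt_le_trans (powR_gt0 (p / r k) block_gt0) _.
by apply: ler_sum_term => // i _; exact: powR_ge0.
Qed.

Lemma mixnorm_hoelder p q (ps qs : 'I_n -> R) (u b : 'rV[R]_m) :
  1 < p -> p^-1 + q^-1 = 1 ->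
  (forall k, 1 < ps k) -> (forall k, (ps k)^-1 + (qs k)^-1 = 1) ->
  `|dotv u b| <= mixnorm ms p ps u * mixnorm ms q qs b.
Proof.
move=> p1 pq ps1 psqs.
have inner : \sum_j `|u ord0 j| * `|b ord0 j| <=
    \sum_k block_sum ps u k `^ (ps k)^-1 * block_sum qs b k `^ (qs k)^-1.
  rewrite (sum_by_blocks hm); apply: ler_sum => k _.
  exact: hoelder_sum (ps1 k) (psqs k) (fun j => normr_ge0 _) (fun j => normr_ge0 _).
have outer : \sum_k block_sum ps u k `^ (ps k)^-1 * block_sum qs b k `^ (qs k)^-1 <=
    mixnorm ms p ps u * mixnorm ms q qs b.
  have mixsumE s r v : \sum_k (block_sum r v k `^ (r k)^-1) `^ s = mixsum s r v.
    by apply: eq_bigr => k _; rewrite -powRrM mulrC.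
  rewrite !mixnormE -!mixsumE.
  exact: hoelder_sum p1 pq (fun k => powR_ge0 _ _) (fun k => powR_ge0 _ _).
apply: le_trans (ler_norm_sum _ _ _) (le_trans _ outer).
by under eq_bigr do rewrite normrM.
Qed.

End MixedNorm.

Section Dual.
Variables (R : realType) (n m : nat) (ms : 'I_n -> nat).
Hypothesis hm : m = (\sum_(i < n) ms i)%N.
Variables (p q : R) (ps qs : 'I_n -> R).
Hypotheses (p1 : 1 < p) (pq : p^-1 + q^-1 = 1).
Hypotheses (ps1 : forall k, 1 < ps k) (psqs : forall k, (ps k)^-1 + (qs k)^-1 = 1).
Implicit Types v : 'rV[R]_m.

Let p0 : 0 < p. Proof. exact: lt_trans p1. Qed.
Let ps0 k : 0 < ps k. Proof. exact: lt_trans (ps1 k). Qed.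
Let ps1_gt0 k : 0 < ps k - 1. Proof. by rewrite subr_gt0. Qed.

(* The filtered sum over [k] has exactly one term: the block containing [j]. *)
Definition dual v : 'rV[R]_m := \row_j \sum_(k | in_block ms k j)
  spowR (ps k - 1) (v ord0 j) * block_sum ms ps v k `^ (p / ps k - 1).

Lemma dualE v k j : in_block ms k j ->
  dual v ord0 j = spowR (ps k - 1) (v ord0 j) * block_sum ms ps v k `^ (p / ps k - 1).
Proof. by move=> kj; rewrite mxE (big_in_block _ _ kj). Qed.

Lemma dotv_dual v : dotv v (dual v) = mixsum ms p ps v.
Proof.
rewrite /dotv (sum_by_blocks hm); apply: eq_bigr => k _.
transitivity (block_sum ms ps v k * block_sum ms ps v k `^ (p / ps k - 1)).
  rewrite /block_sum mulr_suml; apply: eq_bigr => j kj.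
  by rewrite (dualE _ kj) mulrA mul_spowR.
rewrite -[X in X * _](powRr1 (block_sum_ge0 _ _ _ _)) -powRD addrC subrK //.
by rewrite mulf_eq0 invr_eq0 (gt_eqF p0) (gt_eqF (ps0 k)).
Qed.

Lemma block_sum_dual v k :
  block_sum ms qs (dual v) k = block_sum ms ps v k `^ (1 + (p / ps k - 1) * qs k).
Proof.
have block_exp_gt0 := conjugate_block_exponent_gt0 p1 (ps1 k) (psqs k).
rewrite powRD; last by rewrite (gt_eqF block_exp_gt0).
rewrite powRr1 ?block_sum_ge0 // powRrM /block_sum mulr_suml.
apply: eq_bigr => j kj; rewrite (dualE _ kj) normrM norm_spowR ?gt_eqF //.
rewrite ger0_norm ?powR_ge0 // powRM ?powR_ge0 // -powRrM.
by rewrite conjugate_subr1_mul.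
Qed.

Lemma mixsum_dual v : mixsum ms q qs (dual v) = mixsum ms p ps v.
Proof.
apply: eq_bigr => k _; rewrite block_sum_dual -powRrM.
by rewrite conjugate_block_exponentE.
Qed.

Lemma dotv_dual_mixnorm v : dotv v (dual v) = mixnorm ms p ps v * mixnorm ms q qs (dual v).
Proof.
rewrite dotv_dual !mixnormE mixsum_dual -powRD pq ?oner_eq0 //.
by rewrite powRr1 ?mixsum_ge0.
Qed.

Lemma mixnorm_dual_gt0 v : 0 < mixnorm ms p ps v -> 0 < mixnorm ms q qs (dual v).
Proof.
rewrite !mixnormE mixsum_dual => N_gt0; apply: powR_gt0.
by apply: gt0_powR N_gt0; rewrite ?invr_gt0 ?mixsum_ge0.
Qed.

Lemma dual_neq0 v : 0 < mixnorm ms p ps v -> dual v != 0.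
Proof.
apply: contraTneq => dual0; rewrite -leNgt mixnormE -dotv_dual dual0.
rewrite /dotv big1 => [|j _]; last by rewrite mxE mulr0.
by rewrite powR0 // invr_eq0 gt_eqF.
Qed.

Section Path.
Variable v : R -> 'rV[R]_m.
Hypothesis v_cont : forall j, continuous (fun l => v l ord0 j).

Lemma continuous_block_sum k : continuous (fun l => block_sum ms ps (v l) k).
Proof.
move=> l0; apply: (@cvg_big_sum _ _ _ _ (fun j l => `|v l ord0 j| `^ ps k)) => j.
apply: (@cvg_comp _ _ _ (fun l => v l ord0 j) (fun y => `|y| `^ ps k) _ (nbhs _)).
  exact: v_cont.
exact: continuous_norm_powR.
Qed.

Lemma continuous_dual j : continuous (fun l => dual (v l) ord0 j).
Proof.
have [k kj] := in_block_exists hm j.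
set S := fun l => block_sum ms ps (v l) k.
have -> : (fun l => dual (v l) ord0 j) =
    fun l => spowR (ps k - 1) (v l ord0 j) * S l `^ (p / ps k - 1).
  by apply: funext => l; rewrite (dualE _ kj).
move=> l0; have [S0|S_neq0] := eqVneq (S l0) 0; last first.
  apply: cvgM.
    apply: (@cvg_comp _ _ _ (fun l => v l ord0 j) (spowR (ps k - 1)) _ (nbhs _)).
      exact: v_cont.
    by apply: continuous_spowR; exact: ps1_gt0.
  apply: (@cvg_comp _ _ _ S (fun b => b `^ _) _ (nbhs (S l0))).
    exact: continuous_block_sum.
  by apply: cvg_powR_gt0; rewrite lt_def S_neq0 block_sum_ge0.
have vj0 : v l0 ord0 j = 0.
  apply/normr0_eq0/(@powR_eq0_eq0 _ _ (ps k))/eqP.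
  by rewrite eq_le powR_ge0 andbT -S0 norm_powR_le_block_sum.
(* The exponent [p / ps k - 1] may be negative, so near a vanishing block sum
   the entry is controlled by the bound [S^((p - 1) / ps k)] instead. *)
rewrite /continuous_at vj0 [spowR _ 0]/spowR sgr0 !mul0r.
apply: (cvg_norm_le0 (g := fun l => `|S l| `^ ((p - 1) / ps k))).
  move=> l; rewrite [in leRHS]ger0_norm ?block_sum_ge0 //.
  exact: norm_spowR_mul_le p1 (ps1 k) (norm_powR_le_block_sum ps (v l) kj).
have exp_gt0 : 0 < (p - 1) / ps k by rewrite divr_gt0 ?subr_gt0.
have := @cvg_comp _ _ _ S (fun y => `|y| `^ ((p - 1) / ps k)) _ (nbhs (S l0)) _
  (@continuous_block_sum k l0) (continuous_norm_powR exp_gt0 (x := S l0)).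
by rewrite S0 normr0 powR0 // gt_eqF.
Qed.

End Path.

Section Optimality.
Variables (x a : 'rV[R]_m).

Lemma mixnorm_hoelder_orth b lam : dotv a b = 0 ->
  `|dotv x b| <= mixnorm ms p ps (x - lam *: a) * mixnorm ms q qs b.
Proof.
move=> ab0; rewrite -[dotv x b]subr0 -(mulr0 lam) -ab0 -dotvBZ.
exact: mixnorm_hoelder.
Qed.

(* [b] may have norm 0 here, the ratio being then [_ / 0 = 0]. *)
Lemma ratio_le_mixnorm b lam : dotv a b = 0 ->
  `|dotv x b| / mixnorm ms q qs b <= mixnorm ms p ps (x - lam *: a).
Proof.
move=> ab0; have [->|Nb_neq0] := eqVneq (mixnorm ms q qs b) 0.
  by rewrite invr0 mulr0 mixnorm_ge0.
rewrite ler_pdivrMr ?lt_def ?Nb_neq0 ?mixnorm_ge0 //.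
exact: mixnorm_hoelder_orth.
Qed.

Lemma mul_dotv_dual_lt0 l : mixnorm ms p ps x < mixnorm ms p ps (x - l *: a) ->
  l * dotv a (dual (x - l *: a)) < 0.
Proof.
move=> Nx_lt_Nu; have Nu_gt0 := le_lt_trans (mixnorm_ge0 _ _ _ _) Nx_lt_Nu.
have Nd_gt0 := mixnorm_dual_gt0 Nu_gt0.
pose d := dual (x - l *: a); rewrite -/d.
have -> : l * dotv a d = dotv x d - dotv (x - l *: a) d by rewrite dotvBZ opprB addrC subrK.
rewrite (dotv_dual_mixnorm (x - l *: a)) subr_lt0.
have hoelder := mixnorm_hoelder hm x d p1 pq ps1 psqs.
apply: le_lt_trans (ler_norm _) (le_lt_trans hoelder _).
by rewrite (ltr_pM2r Nd_gt0); exact: Nx_lt_Nu.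
Qed.

Lemma mixnorm_coercive : a != 0 ->
  exists2 L, 0 < L & forall l, L <= `|l| -> mixnorm ms p ps x < mixnorm ms p ps (x - l *: a).
Proof.
move=> a_neq0; pose d := dual a.
have Na_gt0 := mixnorm_gt0 hm p ps a_neq0.
have Nd_gt0 := mixnorm_dual_gt0 Na_gt0.
have c_gt0 := mulr_gt0 Na_gt0 Nd_gt0.
have NxNd_ge0 := mulr_ge0 (mixnorm_ge0 ms p ps x) (ltW Nd_gt0).
have xd_ge0 := normr_ge0 (dotv x d).
exists ((`|dotv x d| + mixnorm ms p ps x * mixnorm ms q qs d + 1) /
        (mixnorm ms p ps a * mixnorm ms q qs d)).
  exact: divr_gt0 (ltr_wpDl (addr_ge0 xd_ge0 NxNd_ge0) ltr01) c_gt0.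
(* Hoelder against [d]: |l| N(a) N(d) - |<x, d>| <= |<x - l a, d>| <= N(x - l a) N(d). *)
move=> l; rewrite (ler_pdivrMr _ _ c_gt0) => large_l.
have := mixnorm_hoelder hm (x - l *: a) d p1 pq ps1 psqs.
rewrite dotvBZ (dotv_dual_mixnorm a) -(ltr_pM2r Nd_gt0).
apply: lt_le_trans.
have := lerB_dist (l * (mixnorm ms p ps a * mixnorm ms q qs d)) (dotv x d).
rewrite distrC normrM (gtr0_norm c_gt0); apply: lt_le_trans.
apply: lt_le_trans (lerB large_l (lexx `|dotv x d|)).
by rewrite addrAC (addrAC `|dotv x d|) subrr add0r ltrDl; exact: ltr01.
Qed.

Lemma continuous_dotv_dual : continuous (fun l : R => dotv a (dual (x - l *: a))).
Proof.
have entry_cont i : continuous (fun l : R => (x - l *: a) ord0 i).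
  move=> l0; rewrite /continuous_at; under eq_fun do rewrite !mxE; rewrite !mxE.
  by apply: cvgB; [exact: cvg_cst | apply: cvgM; [exact: cvg_id | exact: cvg_cst]].
move=> l0; rewrite /continuous_at /dotv.
apply: (cvg_big_sum (F := fun j l => a ord0 j * dual (x - l *: a) ord0 j)) => j.
apply: cvgM; first exact: cvg_cst.
exact: (continuous_dual entry_cont).
Qed.

Lemma exists_dual_orthogonal : a != 0 ->
  exists lam0, dotv a (dual (x - lam0 *: a)) = 0.
Proof.
move=> a_neq0; have [L L_gt0 coercive] := mixnorm_coercive a_neq0.
pose f l := dotv a (dual (x - l *: a)).
have fL_lt0 : f L < 0.
  rewrite -(pmulr_rlt0 _ L_gt0); apply: mul_dotv_dual_lt0.
  by apply: coercive; rewrite gtr0_norm.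
have fNL_gt0 : 0 < f (- L).
  have NL_lt0 : - L < 0 by rewrite oppr_lt0; exact: L_gt0.
  rewrite -(nmulr_rlt0 _ NL_lt0); apply: mul_dotv_dual_lt0.
  by apply: coercive; rewrite normrN gtr0_norm.
have NL_le_L := ltW (gtrN L_gt0).
have f_sign_change : Num.min (f (- L)) (f L) <= 0 <= Num.max (f (- L)) (f L).
  rewrite ge_min le_max; apply/andP; split; apply/orP.
  - by right; exact: ltW fL_lt0.
  - by left; exact: ltW fNL_gt0.
have [lam0 _ f_lam0] :=
  IVT NL_le_L (continuous_subspaceT continuous_dotv_dual) f_sign_change.
by exists lam0; exact: f_lam0.
Qed.

Section DualOrthogonal.
Variable lam0 : R.
Hypothesis a_dual0 : dotv a (dual (x - lam0 *: a)) = 0.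

Lemma dotv_dual_orthogonal :
  dotv x (dual (x - lam0 *: a)) = dotv (x - lam0 *: a) (dual (x - lam0 *: a)).
Proof. by rewrite dotvBZ a_dual0 mulr0 subr0. Qed.

Lemma dual_orthogonal_min lam :
  mixnorm ms p ps (x - lam0 *: a) <= mixnorm ms p ps (x - lam *: a).
Proof.
have [->|N_neq0] := eqVneq (mixnorm ms p ps (x - lam0 *: a)) 0.
  exact: mixnorm_ge0.
have N_gt0 : 0 < mixnorm ms p ps (x - lam0 *: a) by rewrite lt_def N_neq0 mixnorm_ge0.
have Nd_gt0 := mixnorm_dual_gt0 N_gt0.
have := mixnorm_hoelder_orth lam a_dual0.
rewrite dotv_dual_orthogonal dotv_dual_mixnorm => /(le_trans (ler_norm _)).
by rewrite (ler_pM2r Nd_gt0).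
Qed.

Lemma dual_orthogonal_ratio : 0 < mixnorm ms p ps (x - lam0 *: a) ->
  `|dotv x (dual (x - lam0 *: a))| / mixnorm ms q qs (dual (x - lam0 *: a))
  = mixnorm ms p ps (x - lam0 *: a).
Proof.
move=> N_gt0; have Nd_gt0 := mixnorm_dual_gt0 N_gt0.
rewrite dotv_dual_orthogonal dotv_dual_mixnorm ger0_norm.
  by rewrite (mulfK (lt0r_neq0 Nd_gt0)).
exact: mulr_ge0 (ltW N_gt0) (ltW Nd_gt0).
Qed.

End DualOrthogonal.

End Optimality.

End Dual.

Theorem theorem5p13 (R : realType) (n m : nat) (ms : 'I_n -> nat)
  (hm : m = (\sum_(i < n) ms i)%N)
  (x a : 'rV[R]_m) (p q : R) (ps qs : 'I_n -> R)
  (hp : 1 < p) (hq : p^-1 + q^-1 = 1)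
  (hps : forall k, 1 < ps k) (hqs : forall k, (ps k)^-1 + (qs k)^-1 = 1)
  (ha : a != 0) :
  (forall b : 'rV[R]_m, dotv a b = 0 -> b != 0 -> forall lam : R,
     `| dotv x b | <= mixnorm ms p ps (x - lam *: a) * mixnorm ms q qs b)
  /\
  ((exists b : 'rV[R]_m, dotv a b = 0 /\ b != 0) ->
   exists lam0 : R, exists b0 : 'rV[R]_m,
     [/\ (forall lam : R, mixnorm ms p ps (x - lam0 *: a) <= mixnorm ms p ps (x - lam *: a)),
         dotv a b0 = 0 /\ b0 != 0,
         (forall b : 'rV[R]_m, dotv a b = 0 -> b != 0 ->
            `| dotv x b | / mixnorm ms q qs b <= `| dotv x b0 | / mixnorm ms q qs b0) &
         mixnorm ms p ps (x - lam0 *: a) = `| dotv x b0 | / mixnorm ms q qs b0]).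
Proof.
split=> [b ab0 _ lam | [b1 [ab1 b1_neq0]]].
  exact (mixnorm_hoelder_orth hm hp hq hps hqs x lam ab0).
have [lam0 a_dual0] := exists_dual_orthogonal hm hp hq hps hqs x ha.
have ratio_le b : dotv a b = 0 ->
    `|dotv x b| / mixnorm ms q qs b <= mixnorm ms p ps (x - lam0 *: a).
  exact (ratio_le_mixnorm hm hp hq hps hqs x lam0).
exists lam0; have [N0|N_neq0] := eqVneq (mixnorm ms p ps (x - lam0 *: a)) 0.
  have ratio0 b : dotv a b = 0 -> `|dotv x b| / mixnorm ms q qs b = 0.
    move=> ab0; apply/le_anti/andP; split; first by rewrite -N0; exact: ratio_le.
    exact: divr_ge0 (normr_ge0 _) (mixnorm_ge0 _ _ _ _).
  exists b1; split.
  - exact (dual_orthogonal_min hm hp hq hps hqs a_dual0).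
  - by split.
  - by move=> b ab0 _; rewrite (ratio0 b ab0) (ratio0 b1 ab1).
  - by rewrite N0 (ratio0 b1 ab1).
have N_gt0 : 0 < mixnorm ms p ps (x - lam0 *: a) by rewrite lt_def N_neq0 mixnorm_ge0.
exists (dual ms p ps (x - lam0 *: a)).
rewrite (dual_orthogonal_ratio hm hp hq hps hqs a_dual0 N_gt0); split.
- exact (dual_orthogonal_min hm hp hq hps hqs a_dual0).
- by split; [exact: a_dual0 | exact (dual_neq0 hm hp hps N_gt0)].
- by move=> b ab0 _; exact: ratio_le.
- by [].
Qed.
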